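(* For any positive integers $r,h,w,p$ there exists a positive integer $s=s(r,h,w,p)$ such that the following holds. Let $G$ be a graph with no subgraph isomorphic to $K_{r,r}$. For each $i\in[p]$ let $\mathcal C_i$ be a collection of pairwise disjoint subsets of $V(G)$, each of size at most $h$, with $|\mathcal C_i|\ge s$. Then for each $i\in[p]$ there exists $\mathcal C_i'\subseteq\mathcal C_i$ with $|\mathcal C_i'|=w$ such that for all $1\le i_1<i_2\le p$, every member of $\mathcal C_{i_1}'$ is disjoint from, and has no edge of $G$ to, every member of $\mathcal C_{i_2}'$.
   Context: Graphs are finite and simple; $[p]=\{1,\dots,p\}$. *)

From mathcomp Require Import all_boot.
Set Implicit Arguments. Unset Strict Implicit. Unset Printing Implicit Defensive.

Definition simple_graph (T : finType) (e : rel T) : Prop :=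
  symmetric e /\ irreflexive e.

Definition has_Krr (T : finType) (e : rel T) (r : nat) : Prop :=
  exists A B : {set T},
    [/\ #|A| = r, #|B| = r, [disjoint A & B] &
        forall x y, x \in A -> y \in B -> e x y].

Definition disjoint_family_le (T : finType) (h : nat) (C : {set {set T}}) : Prop :=
  (forall X, X \in C -> #|X| <= h) /\
  (forall X Y, X \in C -> Y \in C -> X != Y -> [disjoint X & Y]).

Definition separated (T : finType) (e : rel T) (X Y : {set T}) : Prop :=
  [disjoint X & Y] /\ (forall x y, x \in X -> y \in Y -> ~~ e x y).

From mathcomp Require Import all_boot zify.
Set Implicit Arguments. Unset Strict Implicit. Unset Printing Implicit Defensive.

(* Two families A, B of pairwise disjoint sets of size <= h are
   separated pair by pair by iterated bipartite Ramsey.  A set X of size <= h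
   is listed as enum X, so a contact between X and Y (a common vertex or an
   edge) happens at a "position" (i, j) in [0,h) x [0,h).  For a fixed
   position c, bipartite Ramsey applied to the relation "X and Y are in contact
   at c" yields large subfamilies that are either completely in contact at c or
   nowhere in contact at c.  The first case is impossible without K_{r,r}:
   the i-th elements of the X's and the j-th elements of the Y's are distinct
   (the sets are disjoint) and pairwise equal-or-adjacent, which produces a
   K_{r,r}.  Running over all h*h positions separates A from B; running over
   all pairs i1 < i2 of indices separates all p families; finally each
   family is shrunk to exactly w members.  All bounds are explicit iterates
   of ramsey_bound, hence independent of the graph.
   The file proves, in order: counting facts and bipartite Ramsey; the two
   K_{r,r} constructions; separation of two families (avoid_contacts,
   separate_two_families); separation of a list of pairs of families
   (separate_families); and finally the theorem. *)

Lemma leq_iter_self (f : nat -> nat) n m : (forall k, k <= f k) -> m <= iter n f m.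
Proof. by move=> hf; elim: n => //= n IH; exact: leq_trans IH (hf _). Qed.

Lemma subset_of_card (U : finType) (A : {set U}) k :
  k <= #|A| -> exists B : {set U}, B \subset A /\ #|B| = k.
Proof.
elim: k => [|k IH] hk; first by exists set0; rewrite sub0set cards0.
have [B [sBA cB]] := IH (ltnW hk).
have : 0 < #|A :\: B| by rewrite cardsDS // cB subn_gt0.
rewrite card_gt0 => /set0Pn [x]; rewrite inE => /andP [xB xA].
exists (x |: B); split; first by rewrite subUset sub1set xA sBA.
by rewrite cardsU1 xB cB.
Qed.

Lemma pigeonhole_fiber (U V : finType) (Q : {set U}) (Vs : {set V}) (f : U -> V) n :
  {in Q, forall y, f y \in Vs} -> #|Vs| * n < #|Q| ->
  exists v, n < #|[set y in Q | f y == v]|.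
Proof.
move=> hf hc; have /existsP // : [exists v, n < #|[set y in Q | f y == v]|].
move: hc; apply: contraLR; rewrite negb_exists -leqNgt => /forallP small_fibers.
rewrite -sum1_card (partition_big f (mem Vs)) /=; last by move=> y /hf.
rewrite -sum_nat_const leq_sum // => v _.
have := small_fibers v; rewrite -leqNgt; apply: leq_trans.
by rewrite -sum1_card; apply: eq_leq; apply: eq_bigl => y; rewrite inE.
Qed.

Definition ramsey_bound (a : nat) : nat := 2 * a + 2 ^ (2 * a) * a.

Lemma leq_ramsey_bound a : a <= ramsey_bound a.
Proof. rewrite /ramsey_bound; lia. Qed.

(* Fix P0 in P
   of size 2a; some trace S = {x in P0 | R x y} is shared by a points y of Q,
   and S or P0 :\: S has size at least a. *)
Lemma bipartite_ramsey (U : finType) (P Q : {set U}) (R : rel U) a :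
  ramsey_bound a <= #|P| -> ramsey_bound a <= #|Q| ->
  exists A B : {set U},
  [/\ A \subset P, B \subset Q, a <= #|A|, a <= #|B| &
   (forall x y, x \in A -> y \in B -> R x y) \/
   (forall x y, x \in A -> y \in B -> ~~ R x y)].
Proof.
move=> hP hQ; case: (posnP a) => [->|a_gt0].
  by exists set0, set0; split; rewrite ?sub0set //; left => x y; rewrite inE.
have [P0 [sP0 cP0]] : exists P0 : {set U}, P0 \subset P /\ #|P0| = 2 * a.
  by apply: subset_of_card; apply: leq_trans hP; rewrite /ramsey_bound leq_addr.
pose trace y := [set x in P0 | R x y].
have trace_sub : {in Q, forall y, trace y \in powerset P0}.
  by move=> y _; rewrite inE; apply/subsetP => x; rewrite inE => /andP [].
have many_y : #|powerset P0| * a.-1 < #|Q|.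
  rewrite card_powerset cP0; apply: leq_trans hQ; rewrite /ramsey_bound.
  move: (2 ^ (2 * a)) => M; case: a a_gt0 {hP cP0 trace_sub} => // a _ /=; nia.
have [S big_fiber] := pigeonhole_fiber trace_sub many_y.
set B := [set y in Q | trace y == S] in big_fiber.
have cB : a <= #|B| by move: big_fiber; case: (a) a_gt0.
have sBQ : B \subset Q by apply/subsetP => y; rewrite inE => /andP [].
have : 0 < #|B| by apply: leq_trans cB.
rewrite card_gt0 => /set0Pn [y0]; rewrite inE => /andP [_ /eqP trace_y0].
have sS : S \subset P0 by rewrite -trace_y0; apply/subsetP => x; rewrite inE => /andP [].
have trace_B y : y \in B -> trace y = S by rewrite inE => /andP [_ /eqP].
have : #|S| + #|P0 :\: S| = 2 * a by rewrite cardsDS // -cP0 subnKC // subset_leq_card.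
case: (leqP a #|S|) => [cS _ | cS cSD].
  exists S, B; split => //; first exact: subset_trans sS sP0.
  by left => x y xS /trace_B tr; move: xS; rewrite -tr inE => /andP [].
exists (P0 :\: S), B; split => //; first exact: subset_trans (subsetDl _ _) sP0.
- lia.
right => x y /setDP [xP0 xS] /trace_B tr.
by apply: contra xS => Rxy; rewrite -tr inE xP0.
Qed.

Definition meets (T : finType) (e : rel T) (x y : T) : bool := (x == y) || e x y.

Definition contact (T : finType) (e : rel T) (c : nat * nat) (X Y : {set T}) : bool :=
  [exists x in X, exists y in Y,
     [&& index x (enum X) == c.1, index y (enum Y) == c.2 & meets e x y]].

Definition pairwise_disjoint (T : finType) (C : {set {set T}}) : Prop :=
  forall X Y, X \in C -> Y \in C -> X != Y -> [disjoint X & Y].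

Lemma pairwise_disjointS (T : finType) (A B : {set {set T}}) :
  A \subset B -> pairwise_disjoint B -> pairwise_disjoint A.
Proof. by move=> sAB dB X Y XA YA; apply: dB; apply: (subsetP sAB). Qed.

Lemma disjoint_familyS (T : finType) h (A B : {set {set T}}) :
  A \subset B -> disjoint_family_le h B -> disjoint_family_le h A.
Proof.
move=> sAB [hB dB]; split; last exact: pairwise_disjointS sAB dB.
by move=> X XA; apply: hB; apply: (subsetP sAB).
Qed.

Definition positions (h : nat) : seq (nat * nat) :=
  [seq (i, j) | i <- iota 0 h, j <- iota 0 h].

Lemma size_positions h : size (positions h) = h * h.
Proof. by rewrite size_allpairs size_iota. Qed.

Section NoKrr.

Variables (T : finType) (e : rel T) (r : nat).

(* Two sets of size >= 2r whose elements pairwise meet contain a K_{r,r}: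
   take any r points of XA and r points of YB outside them. *)
Lemma Krr_of_meeting_sets (XA YB : {set T}) :
  2 * r <= #|XA| -> 2 * r <= #|YB| ->
  (forall x y, x \in XA -> y \in YB -> meets e x y) -> has_Krr e r.
Proof.
move=> cX cY hmeet.
have [A [sA cA]] : exists A : {set T}, A \subset XA /\ #|A| = r by apply: subset_of_card; lia.
have [B [sB cB]] : exists B : {set T}, B \subset YB :\: A /\ #|B| = r.
  by apply: subset_of_card; rewrite cardsD; have := subset_leq_card (subsetIr YB A); lia.
have [sBY sBA] : B \subset YB /\ [disjoint A & B].
  split; first exact: subset_trans sB (subsetDl _ _).
  by rewrite disjoint_sym disjoint_subset (subset_trans sB) //; apply/subsetP => y; rewrite !inE => /andP [].
exists A, B; split=> // x y xA yB.
have /orP [/eqP exy | //] := hmeet x y (subsetP sA x xA) (subsetP sBY y yB).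
by move: (disjointFl sBA yB); rewrite -exy xA.
Qed.

Lemma contact_nth c (X Y : {set T}) x0 : contact e c X Y ->
  [/\ nth x0 (enum X) c.1 \in X, nth x0 (enum Y) c.2 \in Y &
      meets e (nth x0 (enum X) c.1) (nth x0 (enum Y) c.2)].
Proof.
case/existsP => x /andP [xX /existsP [y /andP [yY /and3P [/eqP <- /eqP <- hxy]]]].
by rewrite !nth_index ?mem_enum.
Qed.

(* Two large pairwise disjoint families in contact at the same position
   everywhere contain a K_{r,r}: the elements at that position are distinct
   representatives of the sets, pairwise meeting. *)
Lemma Krr_of_uniform_contact c (A B : {set {set T}}) :
  pairwise_disjoint A -> pairwise_disjoint B -> 2 * r <= #|A| -> 2 * r <= #|B| ->
  (forall X Y, X \in A -> Y \in B -> contact e c X Y) -> has_Krr e r.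
Proof.
move=> dA dB cA cB hc.
have Krr_of_empty (S : {set {set T}}) : 2 * r <= #|S| -> S = set0 -> has_Krr e r.
  move=> cS S0; move: cS; rewrite S0 cards0 => cS.
  by apply: (Krr_of_meeting_sets (XA := set0) (YB := set0)); rewrite ?cards0 // => x y; rewrite inE.
have [/set0Pn [X0 X0A] | /negbNE/eqP A0] := boolP (A != set0); last exact: Krr_of_empty cA A0.
have [/set0Pn [Y0 Y0B] | /negbNE/eqP B0] := boolP (B != set0); last exact: Krr_of_empty cB B0.
have /existsP [x0 _] := hc _ _ X0A Y0B.
pose rep1 (X : {set T}) := nth x0 (enum X) c.1.
pose rep2 (Y : {set T}) := nth x0 (enum Y) c.2.
have rep1_in X : X \in A -> rep1 X \in X.
  by move=> XA; have [] := contact_nth x0 (hc _ _ XA Y0B).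
have rep2_in Y : Y \in B -> rep2 Y \in Y.
  by move=> YB; have [] := contact_nth x0 (hc _ _ X0A YB).
have rep_inj (C : {set {set T}}) rep : pairwise_disjoint C ->
    (forall X, X \in C -> rep X \in X) -> {in C &, injective rep}.
  move=> dC rep_in X X' XC X'C eq_rep; apply/eqP; apply/negPn/negP => nX.
  by have := disjointFr (dC _ _ XC X'C nX) (rep_in _ XC); rewrite eq_rep rep_in.
apply: (Krr_of_meeting_sets (XA := rep1 @: A) (YB := rep2 @: B)).
- by rewrite card_in_imset //; exact: rep_inj.
- by rewrite card_in_imset //; exact: rep_inj.
move=> x y /imsetP [X XA ->] /imsetP [Y YB ->].
by have [] := contact_nth x0 (hc _ _ XA YB).
Qed.

Hypothesis noKrr : ~ has_Krr e r.

(* One Ramsey round per position: the size needed to kill one more position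
   while keeping subfamilies of size f. *)
Definition position_step (f : nat) : nat := ramsey_bound (maxn f (2 * r)).

Lemma leq_position_step f : f <= position_step f.
Proof. exact: leq_trans (leq_maxl _ _) (leq_ramsey_bound _). Qed.

Lemma avoid_contacts (cs : seq (nat * nat)) m (A B : {set {set T}}) :
  pairwise_disjoint A -> pairwise_disjoint B ->
  iter (size cs) position_step m <= #|A| -> iter (size cs) position_step m <= #|B| ->
  exists A' B' : {set {set T}},
  [/\ A' \subset A, B' \subset B, m <= #|A'|, m <= #|B'| &
    forall c X Y, c \in cs -> X \in A' -> Y \in B' -> ~~ contact e c X Y].
Proof.
elim: cs A B => [|c cs IH] A B dA dB /= cA cB; first by exists A, B; split.
have [A1 [B1 [sA1 sB1 cA1 cB1 [in_contact | no_contact]]]] :=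
  bipartite_ramsey (contact e c) cA cB.
  case: noKrr; apply: (Krr_of_uniform_contact (c := c) (A := A1) (B := B1)) => //.
  - exact: pairwise_disjointS sA1 dA.
  - exact: pairwise_disjointS sB1 dB.
  - exact: leq_trans (leq_maxr _ _) cA1.
  - exact: leq_trans (leq_maxr _ _) cB1.
have [A' [B' [sA' sB' cA' cB' no_cs]]] :=
  IH A1 B1 (pairwise_disjointS sA1 dA) (pairwise_disjointS sB1 dB)
     (leq_trans (leq_maxl _ _) cA1) (leq_trans (leq_maxl _ _) cB1).
exists A', B'; split => //; [exact: subset_trans sA' sA1 | exact: subset_trans sB' sB1 |].
move=> c' X Y; rewrite inE => /orP [/eqP -> XA' YB' | ]; last exact: no_cs.
by apply: no_contact; [apply: (subsetP sA') | apply: (subsetP sB')].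
Qed.

End NoKrr.

Lemma contact_of_meets (T : finType) (e : rel T) h (X Y : {set T}) x y :
  #|X| <= h -> #|Y| <= h -> x \in X -> y \in Y -> meets e x y ->
  exists2 c, c \in positions h & contact e c X Y.
Proof.
move=> hX hY xX yY hxy; exists (index x (enum X), index y (enum Y)).
  apply: allpairs_f; rewrite mem_iota /= add0n.
    by apply: leq_trans hX; rewrite cardE index_mem mem_enum.
  by apply: leq_trans hY; rewrite cardE index_mem mem_enum.
by apply/existsP; exists x; rewrite xX; apply/existsP; exists y; rewrite yY !eqxx.
Qed.

Lemma separated_of_no_contact (T : finType) (e : rel T) h (X Y : {set T}) :
  #|X| <= h -> #|Y| <= h ->
  (forall c, c \in positions h -> ~~ contact e c X Y) -> separated e X Y.
Proof.
move=> hX hY no_contact.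
have no_meet x y : x \in X -> y \in Y -> ~~ meets e x y.
  move=> xX yY; apply/negP => /(contact_of_meets hX hY xX yY) [c hc].
  by apply/negP; exact: no_contact.
split=> [|x y xX yY]; last by have := no_meet x y xX yY; rewrite negb_or => /andP [].
rewrite disjoint_subset; apply/subsetP => x xX; rewrite inE; apply/negP => xY.
by have := no_meet x x xX xY; rewrite /meets eqxx.
Qed.

Definition pair_bound (r h m : nat) : nat := iter (h * h) (position_step r) m.

Lemma leq_pair_bound r h m : m <= pair_bound r h m.
Proof. by apply: leq_iter_self => k; exact: leq_position_step. Qed.

Lemma separate_two_families (T : finType) (e : rel T) r h m (A B : {set {set T}}) :
  ~ has_Krr e r -> disjoint_family_le h A -> disjoint_family_le h B ->
  pair_bound r h m <= #|A| -> pair_bound r h m <= #|B| ->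
  exists A' B' : {set {set T}},
  [/\ A' \subset A, B' \subset B, m <= #|A'|, m <= #|B'| &
    forall X Y, X \in A' -> Y \in B' -> separated e X Y].
Proof.
move=> noKrr [hA dA] [hB dB]; rewrite /pair_bound -size_positions => cA cB.
have [A' [B' [sA sB cA' cB' no_contact]]] := avoid_contacts noKrr dA dB cA cB.
exists A', B'; split => // X Y XA YB.
apply: separated_of_no_contact; [exact/hA/(subsetP sA) | exact/hB/(subsetP sB) |].
by move=> c hc; apply: no_contact.
Qed.

Lemma separate_families (T : finType) (e : rel T) r h w (I : eqType)
    (L : seq (I * I)) (C : I -> {set {set T}}) :
  ~ has_Krr e r -> (forall ij, ij \in L -> ij.1 != ij.2) ->
  (forall i, disjoint_family_le h (C i)) ->
  (forall i, iter (size L) (pair_bound r h) w <= #|C i|) ->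
  exists C' : I -> {set {set T}},
    (forall i, C' i \subset C i /\ w <= #|C' i|) /\
    (forall ij, ij \in L -> forall X Y, X \in C' ij.1 -> Y \in C' ij.2 -> separated e X Y).
Proof.
move=> noKrr; elim: L C => [|[i1 i2] L IH] C distinct famC /= cC.
  by exists C; split => // i; split.
have ne12 : i1 != i2 by apply: (distinct (i1, i2)); rewrite mem_head.
have [A [B [sA sB cA cB sepAB]]] := separate_two_families noKrr (famC i1) (famC i2) (cC i1) (cC i2).
pose D i := if i == i1 then A else if i == i2 then B else C i.
have sD i : D i \subset C i by rewrite /D; case: eqP => [->|_] //; case: eqP => [->|_].
have cD i : iter (size L) (pair_bound r h) w <= #|D i|.
  rewrite /D; case: eqP => // _; case: eqP => // _.
  exact: leq_trans (leq_pair_bound _ _ _) (cC i).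
have distinctL ij : ij \in L -> ij.1 != ij.2.
  by move=> ijL; apply: distinct; rewrite inE ijL orbT.
have [C' [sC' sepL]] := IH D distinctL (fun i => disjoint_familyS (sD i) (famC i)) cD.
exists C'; split.
  by move=> i; have [s1 c1] := sC' i; split => //; exact: subset_trans s1 (sD i).
move=> ij; rewrite inE => /orP [/eqP -> /= X Y XC YC|]; last exact: sepL.
apply: sepAB; first by have [s1 _] := sC' i1; move: (subsetP s1 X XC); rewrite /D eqxx.
have [s1 _] := sC' i2; move: (subsetP s1 Y YC).
by rewrite /D eq_sym (negbTE ne12) eqxx.
Qed.

Theorem mainTheorem10 :
  forall r h w p : nat, 0 < r -> 0 < h -> 0 < w -> 0 < p ->
  exists s : nat, 0 < s /\
    forall (T : finType) (e : rel T), simple_graph e -> ~ has_Krr e r ->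
    forall C : 'I_p -> {set {set T}},
      (forall i, disjoint_family_le h (C i)) ->
      (forall i, s <= #|C i|) ->
      exists C' : 'I_p -> {set {set T}},
        (forall i, C' i \subset C i /\ #|C' i| = w) /\
        (forall i1 i2 : 'I_p, (i1 < i2)%N ->
           forall X Y, X \in C' i1 -> Y \in C' i2 -> separated e X Y).
Proof.
move=> r h w p _ _ w_gt0 _.
pose L := [seq ij : 'I_p * 'I_p <- enum {: 'I_p * 'I_p} | ij.1 < ij.2].
have distinct ij : ij \in L -> ij.1 != ij.2.
  by rewrite mem_filter => /andP [lt _]; apply/eqP => eq12; rewrite eq12 ltnn in lt.
exists (iter (size L) (pair_bound r h) w); split.
  by apply: leq_trans w_gt0 _; apply: leq_iter_self => k; exact: leq_pair_bound.
move=> T e _ noKrr C famC cC.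
have [C1 [sC1 sepL]] := separate_families noKrr distinct famC cC.
have /fin_all_exists [C' shrink] : forall i, exists D : {set {set T}}, D \subset C1 i /\ #|D| = w.
  by move=> i; apply: subset_of_card; case: (sC1 i).
exists C'; split=> [i | i1 i2 lt12 X Y XC' YC'].
  by have [s1 c1] := shrink i; split => //; exact: subset_trans s1 (proj1 (sC1 i)).
apply: (sepL (i1, i2)); first by rewrite mem_filter lt12 mem_enum.
- exact: (subsetP (proj1 (shrink i1))).
- exact: (subsetP (proj1 (shrink i2))).
Qed.
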